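(* Suppose $(a_1,a_1),\dots,(a_\ell,a_\ell)\in R$ are distinct, and that there exist $\bullet_1,\dots,\bullet_\ell\in\{\circ,\ast\}$ such that $a_1\bullet_1a_1,\dots,a_\ell\bullet_\ell a_\ell$ are pairwise distinct. Then $\pi\ge\ell(n-2q-m+1)$. Moreover, such $\bullet_i$ always exist if $n$ is odd or if $\ell=2$.
   Context: $G$ is a set of size $n$ and $G(\circ)$, $G(\ast)$ are distinct groups on $G$ with the same identity element. $\mathrm{diff}(\circ,\ast)=\{(a,b):a\circ b\ne a\ast b\}$, $\mathrm{dist}(\circ,\ast)=|\mathrm{diff}(\circ,\ast)|$, $\mathrm{dist}_a=|\{b:a\circ b\ne a\ast b\}|$; $H=\{a:\mathrm{dist}_a=0\}$, $h=|H|$; $K=\{a:\mathrm{dist}_a<n/3\}$, $k=|K|$; $m=\min\{\mathrm{dist}_a:\mathrm{dist}_a>0\}$. Standing assumption: $m\ge 3$. Let $q=\lceil n/3\rceil$ and the profit $\pi=\mathrm{dist}(\circ,\ast)-((k-h)m+(n-k)q)$. Let $R=\{(a,a)\in\mathrm{diff}(\circ,\ast):a\in K\}$, $r=|R|$. *)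

From mathcomp Require Import all_boot all_order all_algebra.
Set Implicit Arguments. Unset Strict Implicit. Unset Printing Implicit Defensive.
Import GRing.Theory Num.Theory.

Section Defs.
Variable T : finType.

Definition is_group (op : T -> T -> T) (e : T) : Prop :=
  [/\ associative op, left_id e op, right_id e op &
      forall x, exists y, op y x = e /\ op x y = e].

Variables (mul1 mul2 : T -> T -> T).

Definition nG : nat := #|T|.
Definition diffs : {set T * T} := [set p | mul1 p.1 p.2 != mul2 p.1 p.2].
Definition dist : nat := #|diffs|.
Definition dista (a : T) : nat := #|[set b | mul1 a b != mul2 a b]|.
Definition Hset : {set T} := [set a | dista a == 0].
Definition hG : nat := #|Hset|.
(* dist_a < n/3  <=>  3 * dist_a < n *)
Definition Kset : {set T} := [set a | 3 * dista a < nG].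
Definition kG : nat := #|Kset|.
(* min of the positive dist_a; default nG is harmless since dist_a <= n
   and the groups are distinct *)
Definition mG : nat := \big[minn/nG]_(a | 0 < dista a) dista a.
Definition qG : nat := (nG + 2) %/ 3.
Definition profit : int :=
  (dist%:Z - ((kG%:Z - hG%:Z) * mG%:Z + (nG%:Z - kG%:Z) * qG%:Z))%R.
Definition Rset : {set T * T} :=
  [set p | [&& p \in diffs, p.1 == p.2 & p.1 \in Kset]].
End Defs.

(* Write the profit as the sum over all a of the excess of dist_a over its share
   of (k - h) m + (n - k) q, namely 0 on H, m on K \ H and q outside K.  For
   (a, a) in R and c = a . a (either product), an agreement-set argument gives
   dist_c + 2 dist_a >= n, so c lies outside K and a, c together contribute an
   excess of at least n + 1 - 2q - m; distinct squares make these pairs disjoint.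
   In a group of odd order squaring is injective, and for two elements one picks
   the product of the second square so as to avoid the first square. *)

From HB Require Import structures.
From mathcomp Require Import all_boot all_order all_algebra all_fingroup all_solvable.
From mathcomp Require Import zify.
Set Implicit Arguments. Unset Strict Implicit. Unset Printing Implicit Defensive.
Import Order.TTheory.

Section GroupLaws.
Variables (T : finType) (op : T -> T -> T) (e : T).
Hypothesis G : is_group op e.

Lemma group_mulA : associative op. Proof. by case: G. Qed.
Lemma group_mul1g : left_id e op. Proof. by case: G. Qed.

Lemma group_mulgI a : injective (op a).
Proof.
case: G => A l _ inv x y hxy; have [b [hb _]] := inv a.
by rewrite -(l x) -(l y) -hb -!A hxy.
Qed.

Lemma group_mulIg a : injective (op^~ a).
Proof.
case: G => A _ r inv x y /= hxy; have [b [_ hb]] := inv a.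
by rewrite -(r x) -(r y) -hb !A hxy.
Qed.

Definition group_inv x : T := odflt x [pick y | op y x == e].

Lemma group_mulVg : left_inverse e group_inv op.
Proof.
move=> x; rewrite /group_inv; case: pickP => [y /eqP //|none].
by case: G => _ _ _ /(_ x) [y [hy _]]; move: (none y); rewrite hy eqxx.
Qed.

Definition group_carrier : Type := T.
HB.instance Definition _ := Finite.copy group_carrier T.
HB.instance Definition _ := Finite_isGroup.Build group_carrier
  group_mulA group_mul1g group_mulVg.

Lemma card_group_carrier : #|{: group_carrier}| = #|T|.
Proof. by apply: (@bij_eq_card group_carrier T id); exists id. Qed.

Lemma odd_card_square_inj : odd #|T| -> injective (fun x => op x x).
Proof.
move=> oddT x y /= sq_xy.
have sqK := @expgK _ [set: group_carrier] 2.
rewrite cardsT card_group_carrier coprimen2 in sqK; have {}sqK := sqK oddT.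
have sqE (z : group_carrier) : (z ^+ 2)%g = op z z by [].
rewrite -(sqK x (in_setT (x : group_carrier))) -(sqK y (in_setT (y : group_carrier))).
by rewrite /= !sqE sq_xy.
Qed.
End GroupLaws.

Definition bsquare (T : Type) (mul1 mul2 : T -> T -> T) (b : bool) (x : T) : T :=
  if b then mul1 x x else mul2 x x.

Lemma dista_sym (T : finType) (mul1 mul2 : T -> T -> T) :
  dista mul2 mul1 =1 dista mul1 mul2.
Proof. by move=> a; apply: eq_card => b; rewrite !inE eq_sym. Qed.

Section SquareRow.
Variables (T : finType) (mul1 mul2 : T -> T -> T) (e1 e2 : T).
Hypotheses (G1 : is_group mul1 e1) (G2 : is_group mul2 e2).

(* Write x.y for mul1 x y and x*y for mul2 x y.  If x lies in none of the three
   disagreement sets below, then (a*a)*x = a*(a*x) = a*(a.x) = a.(a.x) = (a.a).x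
   = (a.a)*x, and cancelling x contradicts a.a <> a*a. *)
Lemma card_le_dista_square a : mul1 a a != mul2 a a ->
  #|T| <= dista mul1 mul2 (mul1 a a) + 2 * dista mul1 mul2 a.
Proof.
move=> sq_neq; rewrite /dista.
set S := [set b | mul1 a b != mul2 a b]; set D := [set b | _ != _].
have agree_sub : ~: D \subset S :|: mul1 a @^-1: S.
  apply/subsetP => x; rewrite !inE negbK => /eqP agree_x.
  case: (mul1 a x =P mul2 a x) => //= agree1; apply/negP => /eqP agree2.
  have : mul2 (mul1 a a) x = mul2 (mul2 a a) x.
    by rewrite -agree_x -(group_mulA G1) agree2 agree1 (group_mulA G2).
  by move/(group_mulIg G2)/eqP; rewrite (negbTE sq_neq).
have := subset_leq_card agree_sub.
have := cardsU S (mul1 a @^-1: S); rewrite (card_preimset _ (group_mulgI G1 (a:=a))).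
have := cardsC D; lia.
Qed.
End SquareRow.

Lemma card_le_dista_bsquare (T : finType) (mul1 mul2 : T -> T -> T) (e1 e2 : T) :
  is_group mul1 e1 -> is_group mul2 e2 -> forall b a, mul1 a a != mul2 a a ->
  #|T| <= dista mul1 mul2 (bsquare mul1 mul2 b a) + 2 * dista mul1 mul2 a.
Proof.
move=> G1 G2 [] a sq_neq; first exact: card_le_dista_square G1 G2 _ sq_neq.
rewrite /bsquare -!(dista_sym mul1).
by apply: card_le_dista_square G2 G1 _ _; rewrite eq_sym.
Qed.

Lemma bigminn_le_cond (I : finType) (P : pred I) (F : I -> nat) x j :
  P j -> \big[minn/x]_(i | P i) F i <= F j.
Proof. by move=> Pj; rewrite -minEnat; exact: (bigmin_le_cond x F Pj). Qed.

Section Profit.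
Variables (T : finType) (mul1 mul2 : T -> T -> T).
Local Notation d := (dista mul1 mul2).
Local Notation n := (nG T).
Local Notation m := (mG mul1 mul2).
Local Notation q := (qG T).
Local Notation H := (Hset mul1 mul2).
Local Notation K := (Kset mul1 mul2).

Lemma dist_sum_dista : dist mul1 mul2 = \sum_a d a.
Proof.
rewrite /dist /dista -sum1_card.
under [RHS]eq_bigr do rewrite -sum1_card.
by rewrite pair_big_dep /=; apply: eq_bigl => -[x y]; rewrite !inE.
Qed.

Lemma Hset_sub_Kset : H \subset K.
Proof.
apply/subsetP => a; rewrite !inE => /eqP ->.
by rewrite muln0 /nG; apply/card_gt0P; exists a.
Qed.

(* The share of a in the term (k - h) m + (n - k) q subtracted in the profit. *)
Definition dista_floor a : nat := if a \in H then 0 else if a \in K then m else q.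

Lemma dista_floor_le a : dista_floor a <= d a.
Proof.
rewrite /dista_floor; case: ifP => [//|aH]; case: ifP => aK.
  by apply: bigminn_le_cond; rewrite lt0n; move: aH; rewrite inE => ->.
by move: aK; rewrite inE /qG => /negbT; rewrite -leqNgt; lia.
Qed.

Lemma sum_dista_floor :
  \sum_a dista_floor a = (kG mul1 mul2 - hG mul1 mul2) * m + (n - kG mul1 mul2) * q.
Proof.
have -> : \sum_a dista_floor a = \sum_(a in K :\: H) m + \sum_(a in ~: K) q.
  rewrite [in RHS]big_mkcond [X in _ + X]big_mkcond -big_split; apply: eq_bigr => a _.
  rewrite /dista_floor in_setD in_setC.
  case: (boolP (a \in H)) => [aH | _]; first by rewrite (subsetP Hset_sub_Kset _ aH).
  by case: (a \in K) => /=; rewrite ?addn0 ?add0n.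
by rewrite /kG /hG /nG !sum_nat_const cardsD (setIidPr Hset_sub_Kset) -(cardsC K) addKn.
Qed.

Lemma profit_sum_excess :
  profit mul1 mul2 = ((\sum_a (d a - dista_floor a))%N%:Z)%R.
Proof.
have d_split : \sum_a d a = \sum_a dista_floor a + \sum_a (d a - dista_floor a).
  by rewrite -big_split /=; apply: eq_bigr => a _; rewrite subnKC ?dista_floor_le.
have hk : hG mul1 mul2 <= kG mul1 mul2 by apply: subset_leq_card Hset_sub_Kset.
have kn : kG mul1 mul2 <= n by apply: max_card.
rewrite /profit dist_sum_dista d_split sum_dista_floor.
by rewrite !subzn // ?addKn // leq_addr.
Qed.

Lemma dista_floor_notin_Kset a : a \notin K -> dista_floor a = q.
Proof.
move=> aK; rewrite /dista_floor (negbTE aK); case: ifP => // aH.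
by move: aK; rewrite (subsetP Hset_sub_Kset _ aH).
Qed.

Lemma in_Rset_diag a : (a, a) \in Rset mul1 mul2 ->
  [/\ mul1 a a != mul2 a a, a \in K & dista_floor a = m].
Proof.
rewrite inE [_ \in diffs _ _]inE /= eqxx /= => /andP[sq_neq aK]; split=> //.
have aH : a \notin H.
  by rewrite inE -lt0n lt0n cards_eq0; apply/set0Pn; exists a; rewrite inE.
by rewrite /dista_floor (negbTE aH) aK.
Qed.
End Profit.

Section SquareExcess.
Variables (T : finType) (mul1 mul2 : T -> T -> T) (e1 e2 : T).
Hypotheses (G1 : is_group mul1 e1) (G2 : is_group mul2 e2).
Local Notation d := (dista mul1 mul2).
Local Notation floor := (dista_floor mul1 mul2).
Local Notation n := (nG T).
Local Notation m := (mG mul1 mul2).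
Local Notation q := (qG T).
Local Notation K := (Kset mul1 mul2).

Lemma bsquare_notin_Kset b a : (a, a) \in Rset mul1 mul2 ->
  bsquare mul1 mul2 b a \notin K.
Proof.
case/in_Rset_diag=> sq_neq aK _; have := card_le_dista_bsquare G1 G2 b sq_neq.
move: aK; rewrite !inE -leqNgt /nG; lia.
Qed.

Lemma square_excess b a : (a, a) \in Rset mul1 mul2 ->
  n.+1 - (2 * q + m) <=
    (d a - floor a) + (d (bsquare mul1 mul2 b a) - floor (bsquare mul1 mul2 b a)).
Proof.
move=> aR; have [sq_neq aK floor_a] := in_Rset_diag aR.
have cK := bsquare_notin_Kset b aR.
have floor_c := dista_floor_notin_Kset cK.
have := card_le_dista_bsquare G1 G2 b sq_neq.
have := dista_floor_le mul1 mul2 (bsquare mul1 mul2 b a).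
have := dista_floor_le mul1 mul2 a.
by move: aK; rewrite inE floor_a floor_c /qG /nG; lia.
Qed.
End SquareExcess.

Lemma sum_disjoint_images_le (I T : finType) (a c : I -> T) (f : T -> nat) :
  injective a -> injective c -> (forall i j, a i != c j) ->
  \sum_i (f (a i) + f (c i)) <= \sum_x f x.
Proof.
move=> a_inj c_inj a_neq_c; set A := a @: [set: I]; set C := c @: [set: I].
have AC_disj : [disjoint A & C].
  rewrite -setI_eq0; apply/eqP/setP => x; rewrite !inE.
  by apply/negP => /andP[/imsetP[i _ ->] /imsetP[j _ /eqP]]; rewrite (negbTE (a_neq_c i j)).
have sum_img (h : I -> T) : injective h -> \sum_i f (h i) = \sum_(x in h @: [set: I]) f x.
  by move=> h_inj; rewrite big_imset //=; [apply: eq_bigl => i; rewrite inE | exact: in2W].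
rewrite big_split /= (sum_img a) // (sum_img c) // -bigU //=.
rewrite [leqRHS](bigID [in A :|: C]) /=.
by apply: leq_trans (leq_addr _ _); apply: eq_leq; apply: eq_bigl => x; rewrite !inE.
Qed.

Lemma injective_ord2 (X : eqType) (f : 'I_2 -> X) : f ord0 != f ord_max -> injective f.
Proof.
have ord2E (i : 'I_2) : i = ord0 \/ i = ord_max.
  by case: i => -[|[|//]] ?; [left | right]; apply: val_inj.
move=> f01 i j; case: (ord2E i) => ->; case: (ord2E j) => -> // /eqP;
  by rewrite ?(negbTE f01) // eq_sym (negbTE f01).
Qed.

Lemma sum_excess_ge_squares (T : finType) (mul1 mul2 : T -> T -> T) (e1 e2 : T)
    (l : nat) (a : 'I_l -> T) (bul : 'I_l -> bool) :
  is_group mul1 e1 -> is_group mul2 e2 -> injective a ->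
  (forall i, (a i, a i) \in Rset mul1 mul2) ->
  injective (fun i => bsquare mul1 mul2 (bul i) (a i)) ->
  l * ((nG T).+1 - (2 * qG T + mG mul1 mul2))
    <= \sum_x (dista mul1 mul2 x - dista_floor mul1 mul2 x).
Proof.
move=> G1 G2 a_inj aR c_inj.
have a_neq_c i j : a i != bsquare mul1 mul2 (bul j) (a j).
  apply: contraNneq (bsquare_notin_Kset G1 G2 (bul j) (aR j)) => <-.
  by case: (in_Rset_diag (aR i)).
apply: leq_trans (sum_disjoint_images_le _ a_inj c_inj a_neq_c).
rewrite -[l in l * _]card_ord -sum_nat_const.
by apply: leq_sum => i _; exact: (square_excess G1 G2 (bul i) (aR i)).
Qed.

Theorem lemma9p1 (T : finType) (mul1 mul2 : T -> T -> T) (e : T)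
  (G1 : is_group mul1 e) (G2 : is_group mul2 e) (hne : mul1 <> mul2)
  (hm : 3 <= mG mul1 mul2) :
  (forall (l : nat) (a : 'I_l -> T) (bul : 'I_l -> bool),
     injective a ->
     (forall i, (a i, a i) \in Rset mul1 mul2) ->
     injective (fun i => if bul i then mul1 (a i) (a i) else mul2 (a i) (a i)) ->
     (l%:Z * ((nG T)%:Z - 2 * (qG T)%:Z - (mG mul1 mul2)%:Z + 1)
        <= profit mul1 mul2)%R)
  /\
  (forall (l : nat) (a : 'I_l -> T),
     injective a ->
     (forall i, (a i, a i) \in Rset mul1 mul2) ->
     odd (nG T) || (l == 2) ->
     exists bul : 'I_l -> bool,
       injective (fun i => if bul i then mul1 (a i) (a i) else mul2 (a i) (a i))).
Proof.
split=> [l a bul a_inj aR c_inj | l a a_inj aR /orP[odd_n | /eqP l2]].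
- have := sum_excess_ge_squares G1 G2 a_inj aR c_inj.
  rewrite profit_sum_excess; set s := \sum_x _.
  by case: (leqP (2 * qG T + mG mul1 mul2) (nG T).+1); nia.
- exists (fun _ => true) => i j /= sq_eq.
  exact/a_inj/(odd_card_square_inj G1 odd_n).
- subst l; have [sq_neq _ _] := in_Rset_diag (aR ord_max).
  pose b := mul1 (a ord_max) (a ord_max) != mul1 (a ord0) (a ord0).
  exists (fun i => (i == ord0) || b); apply: injective_ord2 => /=.
  rewrite /b; case: (_ =P mul1 (a ord0) (a ord0)) => [<- // | /eqP]; by rewrite eq_sym.
Qed.
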